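(* Let $R$ be a ring and let $\mathcal{L}$ and $\mathcal{G}$ be two classes of left $R$-modules such that $0\in\mathcal{L}$ and $R\in\mathcal{L}$. Then the following conditions are equivalent. (1) $\underline{\mathfrak{Pr}}^{-1}_{R\text{-Mod}}(\mathcal{L})=\mathcal{G}$. (2) $\underline{\mathfrak{Pr}}^{-1}_{\mathscr{C}(R)}(\mathscr{C}^b(\mathcal{L}))=\widetilde{\mathcal{G}}$. (3) $\underline{\mathfrak{Pr}}^{-1}_{\mathscr{C}(R)}(\mathscr{C}^-(\mathcal{L}))=\widetilde{\mathcal{G}}$. (4) $\underline{\mathfrak{Pr}}^{-1}_{\mathscr{C}(R)}(dg\widetilde{\mathcal{L}})=\widetilde{\mathcal{G}}$.
   Context: $R$ is an associative ring with unit; modules are left $R$-modules; $\mathscr{C}(R)$ is the category of homologically indexed complexes $X=(\cdots\to X_{n+1}\xrightarrow{d_{n+1}}X_n\xrightarrow{d_n}X_{n-1}\to\cdots)$. For objects $M,N$ of an abelian category $\mathscr{A}$ with enough projectives ($\mathscr{A}=R\text{-Mod}$ or $\mathscr{C}(R)$), $M$ is $N$-subprojective if every morphism $M\to N$ factors through a projective object of $\mathscr{A}$; $\underline{\mathfrak{Pr}}^{-1}_{\mathscr{A}}(M)$ is the class of all $N$ such that $M$ is $N$-subprojective, and for a class $\mathfrak{C}$, $\underline{\mathfrak{Pr}}^{-1}_{\mathscr{A}}(\mathfrak{C})$ is the class of $N$ such that every $C\in\mathfrak{C}$ is $N$-subprojective. A complex $X$ is bounded (resp. bounded below) if there is $b$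 with $X_n=0$ for all $n\ge b$ and for all $n\le b'$ for some $b'$ (resp. $X_n=0$ for all $n\le b$). For a class of modules $\mathcal{L}$: $\mathscr{C}^b(\mathcal{L})$ (resp. $\mathscr{C}^-(\mathcal{L})$) is the class of bounded (resp. bounded below) complexes with all terms in $\mathcal{L}$; $\widetilde{\mathcal{L}}$ is the class of exact complexes all of whose cycles $Z_n(X)=\mathrm{Ker}\,d_n$ lie in $\mathcal{L}$. For complexes $X,Y$, $\mathrm{Hom}^\bullet(X,Y)$ is the complex of abelian groups with $\mathrm{Hom}^\bullet(X,Y)_n=\prod_{i}\mathrm{Hom}_R(X_i,Y_{i+n})$ and differential $\psi\mapsto(d^Y_{i+n}\psi_i-(-1)^n\psi_{i-1}d^X_i)_i$. A complex $X$ is a $dg\mathcal{L}$ complex if $X_n\in\mathcal{L}$ for all $n$ and $\mathrm{Hom}^\bullet(X,G)$ is exact for every exact complex $G$ all of whose cycles lie in $\underline{\mathfrak{Pr}}^{-1}_{R\text{-Mod}}(\mathcal{L})$; $dg\widetilde{\mathcal{L}}$ denotes the class of $dg\mathcal{L}$ complexes. *)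

From HB Require Import structures.
From mathcomp Require Import all_boot all_order all_algebra.
Set Implicit Arguments. Unset Strict Implicit. Unset Printing Implicit Defensive.
Import Order.TTheory GRing.Theory Num.Theory.
Local Open Scope ring_scope.

Section Modules.
Variable R : pzRingType.

Definition trivial_mod (M : lmodType R) : Prop := forall x : M, x = 0.

Definition mod_iso (M N : lmodType R) : Prop :=
  exists (f : {linear M -> N}) (g : {linear N -> M}),
    (forall x, g (f x) = x) /\ (forall y, f (g y) = y).
Definition iso_closed (C : lmodType R -> Prop) : Prop :=
  forall M N, mod_iso M N -> C M -> C N.

Definition projective_mod (P : lmodType R) : Prop :=
  forall (M N : lmodType R) (g : {linear M -> N}),
    (forall y, exists x, g x = y) ->
    forall h : {linear P -> N}, exists k : {linear P -> M},
      forall x, g (k x) = h x.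

Definition subproj_mod (M N : lmodType R) : Prop :=
  forall f : {linear M -> N}, exists P : lmodType R, projective_mod P /\
    exists (a : {linear M -> P}) (b : {linear P -> N}), forall x, b (a x) = f x.

Definition PrInv_mod (C : lmodType R -> Prop) (N : lmodType R) : Prop :=
  forall M, C M -> subproj_mod M N.

Section Kernel.
Variables (M N : lmodType R) (f : {linear M -> N}).
Definition ker_pred : pred M := fun x => f x == 0.
Fact ker_closed : subsemimod_closed ker_pred.
Proof.
split; first split.
- by rewrite unfold_in /ker_pred raddf0.
- move=> x y; rewrite !unfold_in /ker_pred => /eqP Hx /eqP Hy.
  apply/eqP; rewrite raddfD; transitivity ((0 : N) + 0); last exact: addr0.
  by congr (_ + _); [exact: Hx | exact: Hy].
move=> a x; rewrite !unfold_in /ker_pred => /eqP Hx.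
apply/eqP; rewrite linearZ; transitivity (a *: (0 : N)); last exact: scaler0.
by congr (_ *: _); exact: Hx.
Qed.
HB.instance Definition _ := GRing.isSubmodClosed.Build R M ker_pred ker_closed.
Record kerT := KerT { kval : M; _ : kval \in ker_pred }.
HB.instance Definition _ := [isSub for kval].
HB.instance Definition _ := [Choice of kerT by <:].
HB.instance Definition _ := [SubChoice_isSubLmodule of kerT by <:].
End Kernel.

(* Complexes of left R-modules, homologically indexed.  The differential is
   encoded as a family [cd i j : X_i -> X_j] which is forced to be zero unless
   j = i - 1; thus [cd i (i-1)] is d_i. *)
Record cpx := Cpx {
  cobj :> int -> lmodType R;
  cd : forall i j : int, {linear cobj i -> cobj j};
  cd_zero : forall i j : int, j <> i - 1 -> forall x, cd i j x = 0;
  cd_sq : forall (i j k : int) x, cd j k (cd i j x) = 0 }.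

Record cmap (X Y : cpx) := CMap {
  cmf :> forall i : int, {linear X i -> Y i};
  cm_comm : forall (i j : int) x, cd Y i j (cmf i x) = cmf j (cd X i j x) }.

(* projective objects of C(R) (epimorphisms = degreewise surjective maps) *)
Definition projective_cpx (P : cpx) : Prop :=
  forall (A B : cpx) (g : cmap A B),
    (forall i y, exists x, g i x = y) ->
    forall h : cmap P B, exists k : cmap P A,
      forall i x, g i (k i x) = h i x.

Definition subproj_cpx (X Y : cpx) : Prop :=
  forall f : cmap X Y, exists P : cpx, projective_cpx P /\
    exists (a : cmap X P) (b : cmap P Y), forall i x, b i (a i x) = f i x.

Definition PrInv_cpx (C : cpx -> Prop) (Y : cpx) : Prop :=
  forall X, C X -> subproj_cpx X Y.

Definition cycles (X : cpx) (i : int) : lmodType R := kerT (cd X i (i - 1)).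

Definition exact_cpx (X : cpx) : Prop :=
  forall (i : int) (x : X i), cd X i (i - 1) x = 0 ->
    exists y : X (i + 1), cd X (i + 1) i y = x.

Definition bounded_cpx (X : cpx) : Prop :=
  exists b b' : int, forall n : int, (b <= n \/ n <= b') -> trivial_mod (X n).
Definition bounded_below_cpx (X : cpx) : Prop :=
  exists b : int, forall n : int, n <= b -> trivial_mod (X n).

Definition Cb (L : lmodType R -> Prop) (X : cpx) : Prop :=
  bounded_cpx X /\ forall n, L (X n).
Definition Cminus (L : lmodType R -> Prop) (X : cpx) : Prop :=
  bounded_below_cpx X /\ forall n, L (X n).
Definition tilde (L : lmodType R -> Prop) (X : cpx) : Prop :=
  exact_cpx X /\ forall n, L (cycles X n).

(* Hom^.(X,Y): an element of degree n is a family (psi_i : X_i -> Y_{i+n})_i;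
   we store it as a family [psi i j : X_i -> Y_j] of which only the
   components with j = i + n are used.  [homD n psi i j] is the component
   X_i -> Y_j (used with j = i + n - 1) of the differential
     (d^Y_{i+n} psi_i - (-1)^n psi_{i-1} d^X_i). *)
Definition homfam (X Y : cpx) := forall i j : int, {linear X i -> Y j}.
Definition homD (X Y : cpx) (n : int) (psi : homfam X Y) (i j : int)
  (x : X i) : Y j :=
  cd Y (i + n) j (psi i (i + n) x)
  - ((-1) ^+ `|n|%N) *: psi (i - 1) j (cd X i (i - 1) x).

Arguments homD {X Y} n psi i j x.

Definition hom_exact (X Y : cpx) : Prop :=
  forall (n : int) (psi : homfam X Y),
    (forall i x, homD n psi i (i + n - 1) x = 0) ->
    exists phi : homfam X Y, forall i x, psi i (i + n) x = homD (n + 1) phi i (i + n) x.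

Definition dgL (L : lmodType R -> Prop) (X : cpx) : Prop :=
  (forall n, L (X n)) /\
  forall G : cpx, exact_cpx G -> (forall n, PrInv_mod L (cycles G n)) ->
    hom_exact X G.

End Modules.
Arguments homD {R X Y} n psi i j x.

(* Each condition is compared with [tilde (PrInv_mod L)]: for [C] one of
   [C^b(L)], [C^-(L)], [dg L], a complex [Y] lies in [PrInv_cpx C] iff it is
   exact with all cycle modules in [PrInv_mod L].  Spheres [S^n(M)], [M] in
   [L], belong to all three classes; a map from a sphere that factors through
   a projective, hence contractible, complex shows that cycles of [Y] are
   boundaries and that maps [M -> Z_n(Y)] factor through projectives.
   Conversely, a map [f : X -> Y] out of a complex of [C] is null homotopic
   (by induction on the degree when [X] is bounded below, by exactness of
   [Hom(X, Y)] when [X] is dg); the homotopy can be chosen with components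
   factoring through projectives [P_i], and then [f] factors through the
   projective complex of discs on the [P_i].  Finally an iso-closed class of
   modules containing [0] is determined by its [tilde], since [N] is a cycle
   module of an exact complex of discs whose other cycle modules vanish. *)

From HB Require Import structures.
From mathcomp Require Import all_boot all_order all_algebra zify.
From Stdlib Require Import IndefiniteDescription ChoiceFacts.
Set Implicit Arguments. Unset Strict Implicit. Unset Printing Implicit Defensive.
Import Order.TTheory GRing.Theory.
Local Open Scope ring_scope.

Lemma dependent_choice (I : Type) (T : I -> Type) (P : forall i, T i -> Prop) :
  (forall i, exists x, P i x) -> exists f : forall i, T i, forall i, P i (f i).
Proof. exact: (non_dep_dep_functional_choice functional_choice). Qed.

Lemma inhabited_forall (I : Type) (T : I -> Type) :
  (forall i, inhabited (T i)) -> inhabited (forall i, T i).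
Proof.
move=> H; have /dependent_choice[f _] : forall i, exists _ : T i, True.
  by move=> i; case: (H i) => x; exists x.
by constructor.
Qed.

Section LinearMaps.
Variable R : pzRingType.

Section Pairing.
Variables (M A B : lmodType R) (f : {linear M -> A}) (g : {linear M -> B}).
Definition lpair (x : M) : A * B := (f x, g x).
Fact lpair_is_linear : linear lpair.
Proof. by move=> a x y; rewrite /lpair !linearP. Qed.
HB.instance Definition _ :=
  GRing.isLinear.Build R M (A * B)%type *:%R lpair lpair_is_linear.
Lemma lpairE x : lpair x = (f x, g x). Proof. by []. Qed.
End Pairing.

Section ScaleVec.
Variables (M : lmodType R) (y : M).
Definition scale_vec (r : R^o) : M := (r : R) *: y.
Fact scale_vec_is_linear : linear scale_vec.
Proof. by move=> a r s; rewrite /scale_vec scalerDl scalerA. Qed.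
HB.instance Definition _ :=
  GRing.isLinear.Build R R^o M *:%R scale_vec scale_vec_is_linear.
End ScaleVec.

Section IndexCast.
Variable F : int -> lmodType R.

Definition eq_cast (a b : int) (e : a = b) (x : F a) : F b := eq_rect a F x b e.
Fact eq_cast_is_linear a b (e : a = b) : linear (eq_cast e).
Proof. by case: b / e. Qed.
HB.instance Definition _ a b (e : a = b) :=
  GRing.isLinear.Build R (F a) (F b) *:%R (eq_cast e) (eq_cast_is_linear e).

(* The transport [F a -> F b] along [a = b], extended by zero when [a <> b];
   it lets families indexed by [int] be compared at propositionally equal
   indices such as [i] and [i - 1 + 1]. *)
Definition idx_cast (a b : int) : {linear F a -> F b} :=
  if a =P b is ReflectT e then eq_cast e : {linear _ -> _} else \0.

Lemma idx_cast_id a x : idx_cast a a x = x.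
Proof.
rewrite /idx_cast; case: eqP => // e.
by rewrite (eq_irrelevance e erefl).
Qed.

Lemma idx_cast_ne a b x : a <> b -> idx_cast a b x = 0.
Proof. by rewrite /idx_cast; case: eqP. Qed.

Lemma idx_cast_eq0 a b x : a = b -> idx_cast a b x = 0 -> x = 0.
Proof. by move=> e; case: b / e; rewrite idx_cast_id. Qed.

End IndexCast.

Section Corestriction.
Variables (A B C : lmodType R) (k : {linear B -> C}) (f : {linear A -> B}).
Hypothesis kf0 : forall x, k (f x) = 0.

Lemma corestr_mem x : f x \in ker_pred k.
Proof. by rewrite unfold_in /ker_pred kf0. Qed.
Definition corestr (x : A) : kerT k := Sub (f x) (corestr_mem x).
Fact corestr_is_linear : linear corestr.
Proof. by move=> a x y; apply: val_inj; rewrite /= linearP. Qed.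
HB.instance Definition _ :=
  GRing.isLinear.Build R A (kerT k) *:%R corestr corestr_is_linear.

Lemma corestrE x : val (corestr x) = f x.
Proof. by []. Qed.
End Corestriction.

Lemma ker_kval (B C : lmodType R) (k : {linear B -> C}) (x : kerT k) : k (val x) = 0.
Proof. by have := valP x; rewrite unfold_in /ker_pred => /eqP. Qed.

End LinearMaps.

Section ModuleFacts.
Variable R : pzRingType.
Implicit Types A B C M N P : lmodType R.

Lemma mod_iso_sym A B : mod_iso A B -> mod_iso B A.
Proof. by move=> [f [g [fK gK]]]; exists g, f. Qed.

Lemma mod_iso_trivial A B : trivial_mod A -> trivial_mod B -> mod_iso A B.
Proof.
by move=> A0 B0; exists \0, \0; split=> x; [rewrite (A0 x) | rewrite (B0 x)].
Qed.

Lemma ker0_iso B C (k : {linear B -> C}) :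
  (forall x, k x = 0) -> mod_iso B (kerT k).
Proof.
by move=> k0; exists (corestr (f := idfun) k0), val; split=> // x; apply: val_inj.
Qed.

Lemma ker_id_trivial B (k : {linear B -> B}) :
  (forall x, k x = x) -> trivial_mod (kerT k).
Proof. by move=> kid x; apply: val_inj; rewrite linear0 -[LHS]kid ker_kval. Qed.

Lemma trivial_projective P : trivial_mod P -> projective_mod P.
Proof. by move=> P0 M N g _ h; exists \0 => x; rewrite (P0 x) !linear0. Qed.

Lemma projective_prod A B :
  projective_mod A -> projective_mod B -> projective_mod (A * B)%type.
Proof.
move=> PA PB M N g gsurj h.
have [kA kAE] := PA M N g gsurj (h \o lpair idfun \0).
have [kB kBE] := PB M N g gsurj (h \o lpair \0 idfun).
exists ((kA \o fst) \+ (kB \o snd)) => -[x y] /=.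
rewrite linearD kAE kBE /= -linearD; congr (h _).
by rewrite !lpairE; apply: injective_projections; rewrite /= ?addr0 ?add0r.
Qed.

Record proj_factorization A B (h : {linear A -> B}) := ProjFactorization {
  pf_obj : lmodType R;
  pf_projective : projective_mod pf_obj;
  pf_in : {linear A -> pf_obj};
  pf_out : {linear pf_obj -> B};
  pf_outK : forall x, pf_out (pf_in x) = h x }.

Definition factors_proj A B (h : {linear A -> B}) := inhabited (proj_factorization h).

Lemma factors_proj_comp A' A B (f : {linear A' -> A}) (h : {linear A -> B}) :
  factors_proj h -> factors_proj (h \o f).
Proof.
case=> -[P PP a b abE]; constructor.
by apply: (ProjFactorization PP (pf_in := a \o f) (pf_out := b)) => x /=.
Qed.

Lemma factors_projD A B (h h' : {linear A -> B}) :
  factors_proj h -> factors_proj h' -> factors_proj (h \+ h').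
Proof.
case=> -[P PP a b abE] [[P' PP' a' b' abE']]; constructor.
apply: (ProjFactorization (projective_prod PP PP') (pf_in := lpair a a')
  (pf_out := (b \o fst) \+ (b' \o snd))) => x /=.
by rewrite abE abE'.
Qed.

Lemma subproj_iso M N N' : mod_iso N N' -> subproj_mod M N -> subproj_mod M N'.
Proof.
move=> [u [w [_ uK]]] MN f.
have [P [PP [a [b abE]]]] := MN (w \o f).
by exists P; split=> //; exists a, (u \o b) => x /=; rewrite abE /= uK.
Qed.

Lemma PrInv_iso (L : lmodType R -> Prop) : iso_closed (PrInv_mod L).
Proof. by move=> N N' NN' HN M LM; apply: subproj_iso NN' (HN M LM). Qed.

Lemma PrInv_trivial (L : lmodType R -> Prop) N : trivial_mod N -> PrInv_mod L N.
Proof.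
by move=> N0 M _ f; exists N; split; [exact: trivial_projective | exists f, idfun].
Qed.

(* [d : Y_(i+1) -> Z_i(Y)] is onto by exactness, so the projective through
   which [g] factors lifts along it.  The lift [h] is a family over all target
   degrees so that it can be used at any spelling of the index [i + 1]. *)
Lemma cycle_lift (Y : cpx R) (i : int) M (g : {linear M -> Y i}) :
  exact_cpx Y -> subproj_mod M (cycles Y i) ->
  (forall x, cd Y i (i - 1) (g x) = 0) ->
  exists h : forall l, {linear M -> Y l},
    (forall l, factors_proj (h l)) /\ forall x, cd Y (i + 1) i (h (i + 1) x) = g x.
Proof.
move=> Yex MZ g0.
have [P [PP [a [b abE]]]] := MZ (corestr g0).
have dd0 x : cd Y i (i - 1) (cd Y (i + 1) i x) = 0 by exact: cd_sq.
have dsurj (z : cycles Y i) : exists y, corestr dd0 y = z.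
  have [y yE] := Yex i (val z) (ker_kval z).
  by exists y; apply: val_inj.
have [c cE] := PP _ _ _ dsurj b.
exists (fun l => idx_cast Y (i + 1) l \o c \o a); split.
  by move=> l; constructor; apply: (ProjFactorization PP (pf_in := a)
    (pf_out := idx_cast Y (i + 1) l \o c)).
by move=> x /=; rewrite idx_cast_id -(corestrE dd0) cE abE.
Qed.

End ModuleFacts.

Section Discs.
Variable R : pzRingType.

Section Construction.
Variable N : int -> lmodType R.

Definition discs_obj (i : int) : lmodType R := (N i * N (i + 1))%type.
Definition discs_diff (i j : int) (p : discs_obj i) : discs_obj j :=
  (0, idx_cast N i (j + 1) p.1).
Arguments discs_diff : clear implicits.
Fact discs_diff_is_linear i j : linear (discs_diff i j).
Proof.
move=> a p q; rewrite /discs_diff /= linearP.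
by apply: injective_projections; rewrite /= ?scaler0 ?addr0.
Qed.
HB.instance Definition _ i j :=
  GRing.isLinear.Build R (discs_obj i) (discs_obj j) *:%R (discs_diff i j)
    (@discs_diff_is_linear i j).

Lemma discs_diff_zero i j : j <> i - 1 -> forall p, discs_diff i j p = 0.
Proof. by move=> ji p; rewrite /discs_diff idx_cast_ne //; lia. Qed.

Lemma discs_diff_sq i j k p : discs_diff j k (discs_diff i j p) = 0.
Proof. by rewrite /discs_diff /= linear0. Qed.

(* The direct sum over [i] of the discs [id : N i -> N i] placed in degrees
   [i] and [i - 1]. *)
Definition discs : cpx R := Cpx discs_diff_zero discs_diff_sq.

Lemma discs_cycle_fst i (p : discs i) : cd discs i (i - 1) p = 0 -> p.1 = 0.
Proof. by move/(congr1 snd)/idx_cast_eq0; apply; lia. Qed.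

Lemma discs_exact : exact_cpx discs.
Proof.
move=> i [t u] /discs_cycle_fst /= ->.
by exists (u, 0); rewrite /= /discs_diff idx_cast_id.
Qed.

Lemma discs_cycles_iso i : mod_iso (N (i + 1)) (cycles discs i).
Proof.
have inr0 u : cd discs i (i - 1) (lpair \0 idfun u) = 0.
  by rewrite /= /discs_diff linear0.
exists (corestr inr0), (snd \o val); split=> [u // | z].
apply: val_inj; rewrite corestrE /= lpairE.
have /= := discs_cycle_fst (ker_kval z).
by case: (kval z) => t u /= ->.
Qed.

Section FromDiscs.
Variables (Y : cpx R) (beta : forall i, {linear N i -> Y i}).

Definition discs_lift_fun i (p : discs i) : Y i :=
  beta i p.1 + cd Y (i + 1) i (beta (i + 1) p.2).
Arguments discs_lift_fun : clear implicits.
Fact discs_lift_is_linear i : linear (discs_lift_fun i).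
Proof.
move=> a p q; rewrite /discs_lift_fun /= !linearP /=.
by rewrite scalerDr addrACA.
Qed.
HB.instance Definition _ i :=
  GRing.isLinear.Build R (discs i) (Y i) *:%R (discs_lift_fun i)
    (@discs_lift_is_linear i).

Lemma discs_lift_comm i j (p : discs i) :
  cd Y i j (discs_lift_fun i p) = discs_lift_fun j (cd discs i j p).
Proof.
rewrite /discs_lift_fun /= /discs_diff /= linear0 add0r linearD cd_sq addr0.
case: (eqVneq j (i - 1)) => [-> | ne].
  by rewrite subrK idx_cast_id.
by rewrite cd_zero ?idx_cast_ne ?linear0 //; [lia | apply/eqP].
Qed.

Definition discs_lift : cmap discs Y := CMap discs_lift_comm.

Lemma discs_liftE i (p : discs i) :
  discs_lift i p = beta i p.1 + cd Y (i + 1) i (beta (i + 1) p.2).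
Proof. by []. Qed.
End FromDiscs.

Section ToDiscs.
Variables (X : cpx R) (alpha : forall i j, {linear X i -> N j}).

Definition to_discs_fun i (x : X i) : discs i :=
  (alpha (i - 1) i (cd X i (i - 1) x), alpha i (i + 1) x).
Arguments to_discs_fun : clear implicits.
Fact to_discs_is_linear i : linear (to_discs_fun i).
Proof.
by move=> a x y; rewrite /to_discs_fun !linearP; apply: injective_projections.
Qed.
HB.instance Definition _ i :=
  GRing.isLinear.Build R (X i) (discs i) *:%R (to_discs_fun i)
    (@to_discs_is_linear i).

Lemma to_discs_comm i j (x : X i) :
  cd discs i j (to_discs_fun i x) = to_discs_fun j (cd X i j x).
Proof.
case: (eqVneq j (i - 1)) => [-> | ne]; last first.
  by rewrite /= discs_diff_zero ?cd_zero ?linear0 //; apply/eqP.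
apply: injective_projections => /=; first by rewrite cd_sq linear0.
by rewrite subrK idx_cast_id.
Qed.

Definition to_discs : cmap X discs := CMap to_discs_comm.
End ToDiscs.

Lemma discs_projective : (forall i, projective_mod (N i)) -> projective_cpx discs.
Proof.
move=> NP A B g gsurj h.
have lift_inl i : exists k : {linear N i -> A i}, forall t, g i (k t) = h i (t, 0).
  by have [k kE] := NP i _ _ _ (gsurj i) (h i \o lpair idfun \0); exists k.
have [kappa kappaE] := dependent_choice lift_inl.
exists (discs_lift kappa) => i [t u].
rewrite discs_liftE linearD -cm_comm !kappaE cm_comm -linearD /= /discs_diff.
by congr (h i _); rewrite idx_cast_id;
  apply: injective_projections; rewrite /= ?addr0 ?add0r.
Qed.

End Construction.

Definition cmap_id (X : cpx R) : cmap X X :=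
  @CMap R X X (fun i => idfun) (fun _ _ _ => erefl).

Section ProjectiveComplex.
Variable Q : cpx R.
Hypothesis Qproj : projective_cpx Q.

(* The counit [discs Q -> Q], (t, u) |-> t + d u, is onto, so it splits. *)
Lemma projective_cpx_contraction : exists l : forall i, {linear Q i -> Q (i + 1)},
  forall i q, cd Q i (i - 1) q = 0 -> cd Q (i + 1) i (l i q) = q.
Proof.
pose counit := discs_lift (fun i => idfun : {linear Q i -> Q i}).
have counit_onto i (y : Q i) : exists p, counit i p = y.
  by exists (y, 0); rewrite discs_liftE /= linear0 addr0.
have [sigma sigmaK] := Qproj counit_onto (cmap_id Q).
exists (fun i => snd \o sigma i) => i q q0.
have sigma1 : (sigma i q).1 = 0.
  by apply: discs_cycle_fst; rewrite cm_comm q0 linear0.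
by move: (sigmaK i q); rewrite discs_liftE sigma1 add0r.
Qed.

Lemma projective_cpx_exact : exact_cpx Q.
Proof.
have [l lK] := projective_cpx_contraction.
by move=> i q q0; exists (l i q); apply: lK.
Qed.

Lemma projective_cpx_component k : projective_mod (Q k).
Proof.
move=> M N p psurj h.
pose discsM := discs (fun _ => M); pose discsN := discs (fun _ => N).
pose pp := discs_lift (fun i => lpair p \0 : {linear M -> discsN i}).
have ppE i (x : discsM i) : pp i x = (p x.1, p x.2).
  by rewrite discs_liftE /= /discs_diff idx_cast_id; apply: injective_projections;
    rewrite /= ?addr0 ?add0r.
have pp_onto i (y : discsN i) : exists x, pp i x = y.
  case: y => y1 y2; have [x1 <-] := psurj y1; have [x2 <-] := psurj y2.
  by exists (x1, x2); rewrite ppE.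
have [kappa kappaE] := Qproj pp_onto (to_discs (fun i j => h \o idx_cast Q i k)).
exists (snd \o kappa k) => x.
by have := congr1 snd (kappaE k x); rewrite ppE /= idx_cast_id.
Qed.

End ProjectiveComplex.

End Discs.

Section Spheres.
Variable R : pzRingType.
Variables (M : lmodType R) (n : int).

(* The kernel of [0] in degree [n] and of the identity elsewhere: a family
   equal to [M] in degree [n] and trivial elsewhere, obtained without any
   dependent match on the degree. *)
Definition sphere_sel (i : int) : {linear M -> M} :=
  if i == n then (\0 : {linear M -> M}) else idfun.
Definition sphere_obj (i : int) : lmodType R := kerT (sphere_sel i).
Definition sphere : cpx R :=
  @Cpx R sphere_obj (fun i j => \0) (fun _ _ _ _ => erefl) (fun _ _ _ _ => erefl).

Lemma sphere_trivial i : i != n -> trivial_mod (sphere i).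
Proof. by move=> /negbTE ne; apply: ker_id_trivial => x; rewrite /sphere_sel ne. Qed.

Lemma sphere_sel_n x : sphere_sel n x = 0.
Proof. by rewrite /sphere_sel eqxx. Qed.

Definition sphere_in : {linear M -> sphere n} := corestr (f := idfun) sphere_sel_n.

Lemma sphere_iso : mod_iso M (sphere n).
Proof. exact: ker0_iso sphere_sel_n. Qed.

Section SphereMap.
Variables (Y : cpx R) (v : {linear M -> Y n}).
Hypothesis v_cycle : forall x, cd Y n (n - 1) (v x) = 0.

Definition sphere_map_fun i : {linear sphere i -> Y i} := idx_cast Y n i \o v \o val.

Lemma sphere_map_comm i j (x : sphere i) :
  cd Y i j (sphere_map_fun i x) = sphere_map_fun j (cd sphere i j x).
Proof.
rewrite /= !linear0; case: (eqVneq i n) => [ein | ne]; last first.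
  by rewrite idx_cast_ne ?linear0 //; apply/eqP; rewrite eq_sym.
subst i; rewrite idx_cast_id.
case: (eqVneq j (n - 1)) => [-> | ne]; first exact: v_cycle.
by rewrite cd_zero //; apply/eqP.
Qed.

Definition sphere_map : cmap sphere Y := CMap sphere_map_comm.

Lemma sphere_mapE x : sphere_map n (sphere_in x) = v x.
Proof. by rewrite /= idx_cast_id. Qed.
End SphereMap.

Section SphereClasses.
Variable L : lmodType R -> Prop.
Hypotheses (Liso : iso_closed L) (Ltriv : forall A, trivial_mod A -> L A) (LM : L M).

Lemma sphere_L i : L (sphere i).
Proof.
case: (eqVneq i n) => [-> | ne]; first exact: Liso sphere_iso LM.
exact/Ltriv/sphere_trivial.
Qed.

Lemma sphere_Cb : Cb L sphere.
Proof.
split; last exact: sphere_L.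
by exists (n + 1), (n - 1) => k kn; apply: sphere_trivial; apply/eqP; lia.
Qed.

Lemma sphere_Cminus : Cminus L sphere.
Proof.
split; last exact: sphere_L.
by exists (n - 1) => k kn; apply: sphere_trivial; apply/eqP; lia.
Qed.

(* A cycle [psi] of degree [m] of [Hom(sphere, G)] is one map [M -> Z_(n+m) G];
   lifting it along the differential of [G] gives [phi] with [D phi = psi]. *)
Lemma sphere_dgL : dgL L sphere.
Proof.
split=> [i | G Gex GL m psi psi_cycle]; first exact: sphere_L.
have psi_n x : cd G (n + m) (n + m - 1) (psi n (n + m) x) = 0.
  by have := psi_cycle n x; rewrite /homD /= !linear0 scaler0 subr0.
have [h [_ hE]] := cycle_lift Gex (GL (n + m) _ (sphere_L n)) psi_n.
exists (fun i j => h j \o idx_cast sphere i n) => i x.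
rewrite /homD /= !linear0 scaler0 subr0.
case: (eqVneq i n) => [ein | ne]; first by subst i; rewrite idx_cast_id addrA hE.
by rewrite (sphere_trivial ne x) !linear0.
Qed.

End SphereClasses.
End Spheres.

Section SphereDetection.
Variable R : pzRingType.

Lemma exact_of_subproj_spheres (Y : cpx R) :
  (forall i, subproj_cpx (sphere R^o i) Y) -> exact_cpx Y.
Proof.
move=> SY i y y0.
have v_cycle (r : R^o) : cd Y i (i - 1) (scale_vec y r) = 0.
  by rewrite /= /scale_vec linearZ_LR y0 scaler0.
have [Q [Qproj [a [b abE]]]] := SY i (sphere_map v_cycle).
have q0 : cd Q i (i - 1) (a i (sphere_in R^o i 1)) = 0 by rewrite cm_comm /= linear0.
have [q qE] := projective_cpx_exact Qproj q0.
exists (b (i + 1) q); rewrite cm_comm qE abE sphere_mapE.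
by rewrite /= /scale_vec scale1r.
Qed.

(* The contraction of [Q] moves the cycle part [M -> Q_n] up to the projective
   [Q_(n+1)], from which [d \o b_(n+1)] lands in [Z_n(Y)]. *)
Lemma cycles_subproj_of_sphere (Y : cpx R) (M : lmodType R) (n : int) :
  subproj_cpx (sphere M n) Y -> subproj_mod M (cycles Y n).
Proof.
move=> SY g.
have v_cycle x : cd Y n (n - 1) (val (g x)) = 0 by exact: ker_kval.
have [Q [Qproj [a [b abE]]]] := SY (sphere_map (v := val \o g) v_cycle).
have [l lK] := projective_cpx_contraction Qproj.
have dd0 x : cd Y n (n - 1) ((cd Y (n + 1) n \o b (n + 1)) x) = 0 by exact: cd_sq.
exists (Q (n + 1)); split; first exact: projective_cpx_component.
exists (l n \o a n \o sphere_in M n), (corestr dd0) => x.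
apply: val_inj; rewrite corestrE /= (cm_comm b) lK; first by rewrite abE sphere_mapE.
by rewrite (cm_comm a) /= linear0.
Qed.

Lemma tilde_PrInv_of_spheres (L : lmodType R -> Prop) (C : cpx R -> Prop) (Y : cpx R) :
  L R^o -> (forall M n, L M -> C (sphere M n)) ->
  PrInv_cpx C Y -> tilde (PrInv_mod L) Y.
Proof.
move=> LR Csph CY; split.
  by apply: exact_of_subproj_spheres => i; apply/CY/Csph.
by move=> n M LM; apply/cycles_subproj_of_sphere/CY/Csph.
Qed.

End SphereDetection.

Section Homotopy.
Variable R : pzRingType.

Definition null_homotopy_at (X Y : cpx R) (f : cmap X Y) (s : homfam X Y) (i : int) :=
  forall x : X i,
    f i x = cd Y (i + 1) i (s i (i + 1) x) + s (i - 1) i (cd X i (i - 1) x).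

Definition null_homotopy (X Y : cpx R) (f : cmap X Y) (s : homfam X Y) :=
  forall i, null_homotopy_at f s i.

Definition cmap_factors_proj (X Y : cpx R) (f : cmap X Y) :=
  exists P : cpx R, projective_cpx P /\
    exists (a : cmap X P) (b : cmap P Y), forall i x, b i (a i x) = f i x.

(* If each [s_(i-1) : X_(i-1) -> Y_i] factors as [c_i \o a_i] through a
   projective [P_i], then [f] factors through [discs P] as
   [x |-> (a_i (d x), a_(i+1) x)] followed by [(t, u) |-> c_i t + d (c_(i+1) u)]. *)
Lemma null_homotopy_factors_proj (X Y : cpx R) (f : cmap X Y) (s : homfam X Y) :
  null_homotopy f s -> (forall i, factors_proj (s (i - 1) i)) -> cmap_factors_proj f.
Proof.
move=> fs sP; have [F] := inhabited_forall sP.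
pose alpha i j : {linear X i -> pf_obj (F j)} := pf_in (F j) \o idx_cast X i (j - 1).
exists (discs (fun i => pf_obj (F i))); split.
  by apply: discs_projective => i; exact: pf_projective.
exists (to_discs alpha), (discs_lift (fun i => pf_out (F i))) => i x.
rewrite discs_liftE /= !pf_outK addrK !idx_cast_id fs.
by rewrite addrC.
Qed.

Section Refinement.
Variables (X Y : cpx R) (f : cmap X Y).
Hypotheses (Yex : exact_cpx Y) (XZ : forall i j, subproj_mod (X i) (cycles Y j)).

(* Lift [d s_i] to [h_i], then the cycle [s_i - h_i] to [k_i], along the
   differential and through projectives; [h_i + k_(i-1) d] is again a null
   homotopy. *)
Lemma null_homotopy_proj_components (s : homfam X Y) : null_homotopy f s ->
  exists s', null_homotopy f s' /\ forall i j, factors_proj (s' i j).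
Proof.
move=> fs.
have lift_ds i : exists h : forall l, {linear X i -> Y l},
    (forall l, factors_proj (h l)) /\
    forall x, cd Y (i + 1) i (h (i + 1) x) = cd Y (i + 1) i (s i (i + 1) x).
  have dds x : cd Y i (i - 1) ((cd Y (i + 1) i \o s i (i + 1)) x) = 0 by exact: cd_sq.
  by have [h hE] := cycle_lift Yex (@XZ i i) dds; exists h.
have [h /all_and2[hP hE]] := dependent_choice lift_ds.
have lift_rest i : exists k : forall l, {linear X i -> Y l},
    (forall l, factors_proj (k l)) /\ forall x,
      cd Y (i + 1 + 1) (i + 1) (k (i + 1 + 1) x) = s i (i + 1) x - h i (i + 1) x.
  have rest_cycle x : cd Y (i + 1) (i + 1 - 1) ((s i (i + 1) \- h i (i + 1)) x) = 0.
    by rewrite addrK /= linearB hE subrr.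
  by have [k kE] := cycle_lift Yex (@XZ i (i + 1)) rest_cycle; exists k.
have [k /all_and2[kP kE]] := dependent_choice lift_rest.
exists (fun i l => h i l \+ (k (i - 1) l \o cd X i (i - 1))); split; last first.
  by move=> i l; apply: factors_projD; [exact: hP | exact: factors_proj_comp].
move=> i x; rewrite /= cd_sq !linear0 addr0 linearD hE.
have := kE (i - 1) (cd X i (i - 1) x); rewrite subrK => ->.
by rewrite addrA subrK fs.
Qed.

End Refinement.

Lemma cmap_factors_proj_of_null_homotopy (X Y : cpx R) (f : cmap X Y) (s : homfam X Y) :
  exact_cpx Y -> (forall i j, subproj_mod (X i) (cycles Y j)) ->
  null_homotopy f s -> cmap_factors_proj f.
Proof.
move=> Yex XZ /(null_homotopy_proj_components Yex XZ)[s' [fs' s'P]].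
exact: null_homotopy_factors_proj fs' (fun i => s'P _ _).
Qed.

Lemma null_homotopy_of_hom_exact (X Y : cpx R) (f : cmap X Y) :
  hom_exact X Y -> exists s, null_homotopy f s.
Proof.
move=> XYex.
have f_cycle i x : homD 0 (fun i j => idx_cast Y i j \o f i) i (i + 0 - 1) x = 0.
  by rewrite /homD addr0 /= !idx_cast_id (cm_comm f) expr0 scale1r subrr.
have [s sE] := XYex 0 _ f_cycle.
exists s => i x; have := sE i x.
by rewrite /homD addr0 add0r /= idx_cast_id expr1 scaleN1r opprK => ->.
Qed.

Definition hom_update (X Y : cpx R) (s : homfam X Y) (i : int)
    (t : forall l, {linear X i -> Y l}) : homfam X Y :=
  fun k l => if k == i then (t l \o idx_cast X k i : {linear _ -> _}) else s k l.
Arguments hom_update {X Y} s i t.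

Lemma hom_update_ne (X Y : cpx R) (s : homfam X Y) i t k l :
  k != i -> hom_update s i t k l = s k l.
Proof. by rewrite /hom_update => /negbTE ->. Qed.

Lemma hom_update_eq (X Y : cpx R) (s : homfam X Y) i t l x :
  hom_update s i t i l x = t l x.
Proof. by rewrite /hom_update eqxx /= idx_cast_id. Qed.

Section BoundedBelow.
Variables (X Y : cpx R) (f : cmap X Y) (b : int).
Hypotheses (Xb : forall i, i <= b -> trivial_mod (X i)) (Yex : exact_cpx Y)
  (XZ : forall i, subproj_mod (X i) (cycles Y i)).

Definition null_upto (k : nat) (s : homfam X Y) :=
  forall i, i <= b + k%:Z -> null_homotopy_at f s i.

Lemma null_upto0 : null_upto 0 (fun i j => \0).
Proof. by move=> i ib x; rewrite (Xb _ x) ?linear0 ?addr0 //; lia. Qed.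

(* [f_i - s_(i-1) d] is a cycle once [s] is a null homotopy in degree [i - 1],
   so it lifts along [d] and extends [s] to degree [i]. *)
Lemma null_upto_step k s : null_upto k s ->
  exists s', null_upto k.+1 s' /\ forall i l, i != b + k.+1%:Z -> s' i l = s i l.
Proof.
move=> sk; set i := b + k.+1%:Z; have ei : i = b + k.+1%:Z by []; clearbody i.
have g_cycle x : cd Y i (i - 1) ((f i \- (s (i - 1) i \o cd X i (i - 1))) x) = 0.
  have := sk (i - 1) _ (cd X i (i - 1) x); rewrite subrK cd_sq linear0 addr0 => sE.
  by rewrite /= linearB (cm_comm f) sE ?subrr //; lia.
have [t [_ tE]] := cycle_lift Yex (@XZ i) g_cycle.
exists (hom_update s i t); split=> [j ji | j l]; last exact: hom_update_ne.
have i1 : i - 1 != i by apply/eqP; lia.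
case: (eqVneq j i) => [-> | ji'] x.
  by rewrite hom_update_eq tE hom_update_ne //= subrK.
rewrite !hom_update_ne //; last by apply/eqP; lia.
by apply: sk; lia.
Qed.

Fixpoint null_seq (k : nat) : {s : homfam X Y | null_upto k s} :=
  if k is k'.+1 then
    let: exist s sP := null_seq k' in
    let: exist s' s'P := constructive_indefinite_description _ (null_upto_step sP) in
    exist _ s' (proj1 s'P)
  else exist _ _ null_upto0.

Lemma null_seq_stable k d i l : i <= b + k%:Z ->
  sval (null_seq (k + d)) i l = sval (null_seq k) i l.
Proof.
move=> ik; elim: d => [|d IH]; first by rewrite addn0.
rewrite addnS /= -IH; case: (null_seq (k + d)) => s sP /=.
case: constructive_indefinite_description => s' [_ s's] /=.
by apply: s's; apply/eqP; lia.
Qed.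

Lemma null_homotopy_of_bounded_below : exists s, null_homotopy f s.
Proof.
exists (fun i l => sval (null_seq (absz (i - b))) i l) => i.
case: (leP i b) => [ib | bi] x; first by rewrite (Xb ib x) !linear0 addr0.
have -> : absz (i - b) = (absz (i - 1 - b)%R + 1)%N by lia.
rewrite -(@null_seq_stable _ 1 (i - 1)); last by lia.
by case: null_seq => s sP /=; apply: sP; lia.
Qed.

End BoundedBelow.
End Homotopy.

Section Characterisation.
Variable R : pzRingType.

(* [N] is recovered as the cycle module [Z_0] of the exact complex
   [discs (sphere N 1)], all of whose other cycle modules are trivial. *)
Lemma tilde_incl (A B : lmodType R -> Prop) :
  iso_closed A -> iso_closed B -> (forall T, trivial_mod T -> A T) ->
  (forall Y, tilde A Y -> tilde B Y) -> forall N, A N -> B N.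
Proof.
move=> Aiso Biso Atriv AB N AN.
have discsA : tilde A (discs (sphere N 1)).
  split=> [|i]; first exact: discs_exact.
  apply: (Aiso _ _ (discs_cycles_iso _ i)).
  case: (eqVneq (i + 1) 1) => [-> | ne]; first exact: Aiso (sphere_iso N 1) AN.
  exact/Atriv/sphere_trivial.
have [_ /(_ 0) B0] := AB _ discsA.
have {B0} := Biso _ _ (mod_iso_sym (discs_cycles_iso _ 0)) B0.
exact: Biso (mod_iso_sym (sphere_iso N 1)).
Qed.

Lemma PrInv_mod_iff_tilde (L G : lmodType R -> Prop) (C : cpx R -> Prop) :
  iso_closed G -> (forall Y, PrInv_cpx C Y <-> tilde (PrInv_mod L) Y) ->
  (forall N, PrInv_mod L N <-> G N) <-> (forall Y, PrInv_cpx C Y <-> tilde G Y).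
Proof.
move=> Giso CL; split=> [LG Y | CG].
  by rewrite CL; split=> -[Yex YZ]; split=> // n; apply/LG/YZ.
have LG Y : tilde (PrInv_mod L) Y <-> tilde G Y by rewrite -CL CG.
have PrInvL_iso : iso_closed (PrInv_mod L) by exact: PrInv_iso.
have PrInvL_triv T : trivial_mod T -> PrInv_mod L T by exact: PrInv_trivial.
have Gtriv T : trivial_mod T -> G T.
  move/PrInvL_triv.
  by apply: tilde_incl PrInvL_iso Giso PrInvL_triv (fun Y => (LG Y).1) T.
by move=> N; split; apply: tilde_incl => // Y /LG.
Qed.

Variable L : lmodType R -> Prop.
Hypotheses (Liso : iso_closed L) (L0 : exists Z, trivial_mod Z /\ L Z) (LR : L R^o).

Lemma L_trivial A : trivial_mod A -> L A.
Proof.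
by move=> A0; have [Z [Z0 LZ]] := L0; exact: Liso (mod_iso_trivial Z0 A0) LZ.
Qed.

Lemma PrInv_cpx_of_tilde (C : cpx R -> Prop) (Y : cpx R) :
  tilde (PrInv_mod L) Y ->
  (forall X, C X -> (forall n, L (X n)) /\
     forall f : cmap X Y, exists s, null_homotopy f s) ->
  PrInv_cpx C Y.
Proof.
move=> [Yex YZ] Chom X /Chom[LX f_null] f.
have [s fs] := f_null f.
by apply: cmap_factors_proj_of_null_homotopy fs => // i j; apply: YZ.
Qed.

Lemma PrInv_Cminus_tilde Y : PrInv_cpx (Cminus L) Y <-> tilde (PrInv_mod L) Y.
Proof.
split.
  by apply: tilde_PrInv_of_spheres => // M n LM; exact: sphere_Cminus L_trivial LM.
move=> YL; apply: (PrInv_cpx_of_tilde YL) => X [[b Xb] LX]; split=> // f.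
case: YL => Yex YZ.
by apply: null_homotopy_of_bounded_below Xb Yex _ => i; apply: YZ.
Qed.

Lemma PrInv_Cb_tilde Y : PrInv_cpx (Cb L) Y <-> tilde (PrInv_mod L) Y.
Proof.
split.
  by apply: tilde_PrInv_of_spheres => // M n LM; exact: sphere_Cb L_trivial LM.
move=> /PrInv_Cminus_tilde YC X [[b [b' Xb]] LX]; apply: YC; split=> //.
by exists b' => n nb; apply: Xb; right.
Qed.

Lemma PrInv_dgL_tilde Y : PrInv_cpx (dgL L) Y <-> tilde (PrInv_mod L) Y.
Proof.
split.
  by apply: tilde_PrInv_of_spheres => // M n LM; exact: sphere_dgL L_trivial LM.
move=> YL; apply: (PrInv_cpx_of_tilde YL) => X [LX Xhom]; split=> // f.
by case: YL => Yex YZ; apply/null_homotopy_of_hom_exact/Xhom.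
Qed.

End Characterisation.

Theorem theorem3p6 (R : pzRingType) (L G : lmodType R -> Prop)
  (HLiso : iso_closed L) (HGiso : iso_closed G)
  (HL0 : exists Z : lmodType R, trivial_mod Z /\ L Z)
  (HLR : L R^o) :
  let c1 := forall N : lmodType R, PrInv_mod L N <-> G N in
  let c2 := forall X : cpx R, PrInv_cpx (Cb L) X <-> tilde G X in
  let c3 := forall X : cpx R, PrInv_cpx (Cminus L) X <-> tilde G X in
  let c4 := forall X : cpx R, PrInv_cpx (dgL L) X <-> tilde G X in
  [/\ c1 <-> c2, c1 <-> c3 & c1 <-> c4].
Proof.
split; apply: PrInv_mod_iff_tilde HGiso _ => Y.
- exact: PrInv_Cb_tilde.
- exact: PrInv_Cminus_tilde.
- exact: PrInv_dgL_tilde.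
Qed.
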